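(* Let $Q$ and $W$ satisfy the standing assumptions with $W=Y$, let $l\ge1$, and let $\mathcal R=\{(\zeta,\hat y)\in\hat X^{I^l_l}\times\hat X^{l\triangledown}:\zeta\in\hat y\}$. Then (i) $\mathcal R$ is a simulation relation from $\hat Q^{I^l_l}$ to $\hat Q^{l\triangledown}$ w.r.t. $Y$ if and only if $Q$ is domino consistent (for this $l$); and (ii) $\mathcal R^{-1}$ is a simulation relation from $\hat Q^{l\triangledown}$ to $\hat Q^{I^l_l}$ w.r.t. $Y$ if and only if $Q$ is future unique w.r.t. $I^l_l$.
   Context: Strings and signals: $\diamond$ is a symbol not in any other set considered. For a set $A$ and $l\in\mathbb N_0$, $A^l$ is the set of strings of length $l$ over $A$, indexed $\zeta=\zeta(0)\cdots\zeta(l-1)$; $\lambda$ is the empty string and $\cdot$ denotes concatenation. For a map $w$ on $\mathbb Z$ (or a string) and integers $t_1\le t_2$, $w|_{[t_1,t_2]}=w(t_1)\cdots w(t_2)$ is the string of length $t_2-t_1+1$ (absolute time forgotten); if $t_2<t_1$ it is $\lambda$. For a set $\mathcal S$ of such maps or strings, $\mathcal S|_{[t_1,t_2]}=\{s|_{[t_1,t_2]}:s\in\mathcal S\}$. State machines: a state machine is $Q=(X,U,Y,\delta,X_0)$ with $X_0\subseteq X$, $\delta\subseteq X\times U\times Y\times X$. Let $H_\delta(x)=\{y:\exists u,x'.\,(x,u,y,x')\in\delta\}$, $F_\delta(x,u)=\{x':\exists y\in H_\delta(x).\,(x,u,y,x')\in\delta\}$. The full behavior $\mathcal B_f(Q)$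 is the set of $(\mu,\nu,\xi)\in(U\times Y\times X)^{\mathbb N_0}$ with $\xi(0)\in X_0$ and $(\xi(k),\mu(k),\nu(k),\xi(k+1))\in\delta$ for all $k\in\mathbb N_0$. $Q$ is live and reachable if every $x\in X_0$ is $\xi(0)$ for some $(\mu,\nu,\xi)\in\mathcal B_f(Q)$ and every $x\in X$ is $\xi(k)$ for some such trajectory and some $k$. Standing assumptions: $Q=(X,U,Y,\delta,X_0)$ is live and reachable and satisfies $(x,u,y,x')\in\delta\iff(x'\in F_\delta(x,u)\wedge y\in H_\delta(x))$ for all $x,x'\in X,u\in U,y\in Y$; the external signal space $W$ is finite and either $W=U\times Y$ or $W=Y$ (here $W=Y$, with $\pi_W(u,y)=\pi_Y(u,y)=y$). Behaviors: $\mathcal B(Q)$ is the set of $w:\mathbb Z\to Y\cup\{\diamond\}$ such that for some $(\mu,\nu,\xi)\in\mathcal B_f(Q)$, $w(k)=\diamond$ for $k<0$ and $w(k)=\nu(k)$ for $k\ge0$. $\mathcal B_S(Q)$ is the set of pairs $(w,\xi)$ of maps on $\mathbb Z$ with $w(k)=\xi(k)=\diamond$ for $k<0$ and $(w(k),\xi(k))=(\nu(k),\xi'(k))$ for $k\ge0$, for some $(\mu,\nu,\xi')\in\mathcal B_f(Q)$. For a set $\mathcal B$ of maps on $\mathbb Z$, $\Pi_l(\mathcal B)=\bigcup_{k\in\mathbb N_0}\mathcal B|_{[k-l+1,k]}$. Corresponding strings: for integers $a,b$ and $x\in X$, $E^{[a,b]}(x)=\{\zeta:\exists(w,\xi)\in\mathcal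 B_S(Q),k\in\mathbb N_0:\ \xi(k)=x,\ \zeta=w|_{[k+a,k+b]}\}$. For $l,m\in\mathbb N_0$ with $m\le l$, $I^l_m=[m-l,m-1]$; in particular $I^l_l=[0,l-1]$. Future uniqueness: $Q$ is future unique w.r.t. $I^l_m$ if for all $x\in X$ and $\zeta,\zeta'\in E^{I^l_m}(x)$, $\zeta|_{[l-m,l-1]}=\zeta'|_{[l-m,l-1]}$. Abstract state machine: $\hat Q^{I^l_m}=(\hat X^{I^l_m},U,Y,\hat\delta^{I^l_m},\hat X^{I^l_m}_0)$ with $\hat X^{I^l_m}=\bigcup_{x\in X}E^{I^l_m}(x)$, $\hat X^{I^l_m}_0=\bigcup_{x\in X_0}E^{I^l_m}(x)$, and $(\hat x,u,y,\hat x')\in\hat\delta^{I^l_m}$ iff (1) $\hat x'|_{[0,l-m-1]}=(\hat x|_{[0,l-m-1]}\cdot\pi_W(u,y))|_{[1,l-m]}$, (2) $\hat x|_{[l-m,l-1]}=(\pi_W(u,y)\cdot\hat x'|_{[l-m,l-2]})|_{[0,m-1]}$, and (3) there are $x,x'\in X$ with $\hat x\in E^{I^l_m}(x)$, $\hat x'\in E^{I^l_m}(x')$, $(x,u,y,x')\in\delta$. Quotient state machine (for $W=Y$): $\hat Q^{l\triangledown}=(\hat X^{l\triangledown},U,Y,\hat\delta^{l\triangledown},\hat X^{l\triangledown}_0)$ with $\hat X^{l\triangledown}=\{E^{I^l_l}(x):x\in X\}$ (a set of subsets of $Y^l$), $\hat X^{l\triangledown}_0=\{E^{I^l_l}(x):x\in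 X_0\}$, and $(\hat x,u,y,\hat x')\in\hat\delta^{l\triangledown}$ iff there exist $x,x'\in X$ with $\hat x=E^{I^l_l}(x)$, $\hat x'=E^{I^l_l}(x')$ and $(x,u,y,x')\in\delta$. Domino consistency (for $W=Y$): $Q$ is domino consistent if for all $\zeta\in\Pi_{l+1}(\mathcal B(Q))$ and all $\hat y\in\hat X^{l\triangledown}$ with $\zeta|_{[0,l-1]}\in\hat y$ there exists $x\in X$ with $E^{I^l_l}(x)=\hat y$ and $\zeta\in E^{[0,l]}(x)$. Simulation relations: for state machines $Q_i=(X_i,U,Y,\delta_i,X_{0,i})$, $i=1,2$, and $V\in\{U\times Y,Y\}$, a relation $\mathcal R\subseteq X_1\times X_2$ is a simulation relation from $Q_1$ to $Q_2$ w.r.t. $V$ if (a) for every $x_1\in X_{0,1}$ there is $x_2\in X_{0,2}$ with $(x_1,x_2)\in\mathcal R$, and (b) for all $(x_1,x_2)\in\mathcal R$ and $(x_1,u_1,y_1,x_1')\in\delta_1$ there exist $u_2,y_2,x_2'$ with $(x_2,u_2,y_2,x_2')\in\delta_2$, $(x_1',x_2')\in\mathcal R$ and $\pi_V(u_1,y_1)=\pi_V(u_2,y_2)$. $\mathcal R^{-1}=\{(x_2,x_1):(x_1,x_2)\in\mathcal R\}$. *)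

From Stdlib Require Import ZArith List.
Import ListNotations.
Set Implicit Arguments.
Open Scope Z_scope.

(* The symbol ◇ is represented by [None]; a symbol a of A by [Some a]. *)

(* w|_[t1,t2] for a map w on Z: the string w(t1)...w(t2) (empty if t2 < t1). *)
Definition restr (A : Type) (w : Z -> A) (t1 t2 : Z) : list A :=
  map (fun i : nat => w (t1 + Z.of_nat i)) (seq 0 (Z.to_nat (t2 - t1 + 1))).

Definition str_fun (A : Type) (s : list (option A)) (i : Z) : option A :=
  if i <? 0 then None else nth (Z.to_nat i) s None.

Definition srestr (A : Type) (s : list (option A)) (t1 t2 : Z) : list (option A) :=
  restr (str_fun s) t1 t2.

Definition FiniteType (A : Type) : Prop := exists l : list A, forall a, In a l.

Definition sim_rel (U Y V S1 S2 : Type)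
  (d1 : S1 -> U -> Y -> S1 -> Prop) (i1 : S1 -> Prop)
  (d2 : S2 -> U -> Y -> S2 -> Prop) (i2 : S2 -> Prop)
  (pi : U -> Y -> V) (R : S1 -> S2 -> Prop) : Prop :=
  (forall x1, i1 x1 -> exists x2, i2 x2 /\ R x1 x2) /\
  (forall x1 x2 u1 y1 x1', R x1 x2 -> d1 x1 u1 y1 x1' ->
     exists u2 y2 x2', d2 x2 u2 y2 x2' /\ R x1' x2' /\ pi u1 y1 = pi u2 y2).

Definition pi_Y (U Y : Type) (u : U) (y : Y) : Y := y.

Section Machine.
Variables (X U Y : Type).
Variable delta : X -> U -> Y -> X -> Prop.
Variable X0 : X -> Prop.

Definition H_delta (x : X) (y : Y) : Prop := exists u x', delta x u y x'.
Definition F_delta (x : X) (u : U) (x' : X) : Prop :=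
  exists y, H_delta x y /\ delta x u y x'.

Definition full_behavior (mu : nat -> U) (nu : nat -> Y) (xi : nat -> X) : Prop :=
  X0 (xi 0%nat) /\ forall k, delta (xi k) (mu k) (nu k) (xi (S k)).

Definition live_reachable : Prop :=
  (forall x, X0 x -> exists mu nu xi, full_behavior mu nu xi /\ xi 0%nat = x) /\
  (forall x, exists mu nu xi k, full_behavior mu nu xi /\ xi k = x).

Definition delta_decomp : Prop :=
  forall x u y x', delta x u y x' <-> (F_delta x u x' /\ H_delta x y).

Definition behavior (w : Z -> option Y) : Prop :=
  exists mu nu xi, full_behavior mu nu xi /\
    (forall k, k < 0 -> w k = None) /\
    (forall k, 0 <= k -> w k = Some (nu (Z.to_nat k))).

Definition behavior_S (w : Z -> option Y) (xi : Z -> option X) : Prop :=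
  exists mu nu xi', full_behavior mu nu xi' /\
    (forall k, k < 0 -> w k = None /\ xi k = None) /\
    (forall k, 0 <= k -> w k = Some (nu (Z.to_nat k)) /\ xi k = Some (xi' (Z.to_nat k))).

Definition Pi (l : nat) (B : (Z -> option Y) -> Prop) (zeta : list (option Y)) : Prop :=
  exists w (k : nat), B w /\ zeta = restr w (Z.of_nat k - Z.of_nat l + 1) (Z.of_nat k).

Definition E (a b : Z) (x : X) (zeta : list (option Y)) : Prop :=
  exists w xi (k : nat), behavior_S w xi /\ xi (Z.of_nat k) = Some x /\
    zeta = restr w (Z.of_nat k + a) (Z.of_nat k + b).

Definition E_I (l m : nat) (x : X) : list (option Y) -> Prop :=
  E (Z.of_nat m - Z.of_nat l) (Z.of_nat m - 1) x.

Definition future_unique (l m : nat) : Prop :=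
  forall x zeta zeta', E_I l m x zeta -> E_I l m x zeta' ->
    srestr zeta (Z.of_nat l - Z.of_nat m) (Z.of_nat l - 1) =
    srestr zeta' (Z.of_nat l - Z.of_nat m) (Z.of_nat l - 1).

Definition Xhat (l m : nat) (z : list (option Y)) : Prop := exists x, E_I l m x z.
Definition Xhat0 (l m : nat) (z : list (option Y)) : Prop := exists x, X0 x /\ E_I l m x z.
Definition deltahat (l m : nat) (z : list (option Y)) (u : U) (y : Y)
    (z' : list (option Y)) : Prop :=
  let L := Z.of_nat l in let M := Z.of_nat m in
  srestr z' 0 (L - M - 1) = srestr (srestr z 0 (L - M - 1) ++ [Some y]) 1 (L - M) /\
  srestr z (L - M) (L - 1) = srestr (Some y :: srestr z' (L - M) (L - 2)) 0 (M - 1) /\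
  exists x x', E_I l m x z /\ E_I l m x' z' /\ delta x u y x'.

Definition Xq (l : nat) (P : list (option Y) -> Prop) : Prop := exists x, P = E_I l l x.
Definition Xq0 (l : nat) (P : list (option Y) -> Prop) : Prop :=
  exists x, X0 x /\ P = E_I l l x.
Definition deltaq (l : nat) (P : list (option Y) -> Prop) (u : U) (y : Y)
    (P' : list (option Y) -> Prop) : Prop :=
  exists x x', P = E_I l l x /\ P' = E_I l l x' /\ delta x u y x'.

Definition domino_consistent (l : nat) : Prop :=
  forall zeta, Pi (S l) behavior zeta ->
  forall P, Xq l P -> P (srestr zeta 0 (Z.of_nat l - 1)) ->
  exists x, E_I l l x = P /\ E 0 (Z.of_nat l) x zeta.

Definition Rel (l : nat) (z : list (option Y)) (P : list (option Y) -> Prop) : Prop :=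
  Xhat l l z /\ Xq l P /\ P z.
Definition Rel_inv (l : nat) (P : list (option Y) -> Prop) (z : list (option Y)) : Prop :=
  Rel l z P.

End Machine.

(* For a live and reachable machine, the strings of E^{[0,b]}(x) are exactly the
   windows of length b+1 of the output sequences of trajectories passing through x,
   and any transition x -> x' can be spliced between a trajectory reaching x and one
   leaving x'.  Hence a transition of the abstract machine shifts an l-window by one
   step along a trajectory.  Simulating such a step in the quotient machine means
   finding, inside the class of the current window, a state from which the
   (l+1)-window continues: this is domino consistency.  Conversely, simulating a
   quotient step by the abstract machine forces the first symbol of every string in
   E^{[0,l-1]}(x) to agree, and iterating along the trajectory forces the whole
   strings to agree: this is future uniqueness for I^l_l. *)

From Stdlib Require Import ZArith List Lia.
Import ListNotations.

Lemma nth_map_seq0 {A : Type} (f : nat -> A) (n i : nat) (d : A) :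
  (i < n)%nat -> nth i (map f (seq 0 n)) d = f i.
Proof.
  intros Hi. rewrite nth_indep with (d' := f 0%nat) by (rewrite length_map, length_seq; lia).
  rewrite map_nth, seq_nth by lia. reflexivity.
Qed.

Lemma firstn_map_nth {A : Type} (s : list (option A)) (n : nat) :
  (n <= length s)%nat -> firstn n s = map (fun i => nth i s None) (seq 0 n).
Proof.
  revert n; induction s as [|a s IH]; intros [|n] H; simpl in *; try reflexivity; try lia.
  f_equal. rewrite IH by lia. rewrite <- seq_shift, map_map. reflexivity.
Qed.

Lemma firstn_eq_le {A : Type} {a b : list A} {m n : nat} :
  (m <= n)%nat -> firstn n a = firstn n b -> firstn m a = firstn m b.
Proof.
  intros Hm H. replace m with (Nat.min m n) by lia.
  rewrite <- (firstn_firstn a m n), <- (firstn_firstn b m n), H. reflexivity.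
Qed.

Lemma srestr_0_map_nth {A : Type} (s : list (option A)) (b : Z) :
  srestr s 0 b = map (fun i => nth i s None) (seq 0 (Z.to_nat (b + 1))).
Proof.
  unfold srestr, restr. replace (b - 0 + 1)%Z with (b + 1)%Z by lia.
  apply map_ext. intro i. unfold str_fun.
  destruct (Z.ltb_spec (0 + Z.of_nat i) 0); [lia|]. f_equal. lia.
Qed.

Lemma srestr_firstn {A : Type} (s : list (option A)) (n : nat) :
  (n <= length s)%nat -> srestr s 0 (Z.of_nat n - 1) = firstn n s.
Proof.
  intros Hn. rewrite srestr_0_map_nth, firstn_map_nth by lia. do 2 f_equal. lia.
Qed.

Lemma srestr_full {A : Type} (s : list (option A)) (n : nat) :
  length s = n -> srestr s 0 (Z.of_nat n - 1) = s.
Proof. intros Hn. rewrite srestr_firstn by lia. apply firstn_all2. lia. Qed.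

Definition window {Y : Type} (nu : nat -> Y) (k n : nat) : list (option Y) :=
  map (fun i => Some (nu (k + i)%nat)) (seq 0 n).

Definition signal_of {A : Type} (f : nat -> A) (t : Z) : option A :=
  if (t <? 0)%Z then None else Some (f (Z.to_nat t)).

Lemma window_length {Y : Type} (nu : nat -> Y) (k n : nat) : length (window nu k n) = n.
Proof. unfold window. rewrite length_map, length_seq. reflexivity. Qed.

Lemma window_S {Y : Type} (nu : nat -> Y) (k n : nat) :
  window nu k (S n) = Some (nu k) :: window nu (S k) n.
Proof.
  unfold window. simpl. rewrite Nat.add_0_r. f_equal.
  rewrite <- seq_shift, map_map. apply map_ext. intros i. do 2 f_equal. lia.
Qed.

Lemma firstn_window {Y : Type} (nu : nat -> Y) (k : nat) {n m : nat} :
  (n <= m)%nat -> firstn n (window nu k m) = window nu k n.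
Proof.
  intros Hnm. rewrite firstn_map_nth by (rewrite window_length; lia).
  unfold window at 2. apply map_ext_in. intros i Hi. apply in_seq in Hi.
  unfold window. rewrite nth_map_seq0 by lia. reflexivity.
Qed.

Lemma window_shift {Y : Type} (nu : nat -> Y) (k : nat) {n : nat} :
  (1 <= n)%nat -> window nu k n = Some (nu k) :: firstn (n - 1) (window nu (S k) n).
Proof.
  intros Hn. destruct n as [|n]; [lia|].
  rewrite window_S, firstn_window by lia. do 3 f_equal. lia.
Qed.

Lemma restr_signal_of {A : Type} (f : nat -> A) {t : Z} (k : nat) {n : nat} :
  t = Z.of_nat k ->
  restr (signal_of f) t (t + Z.of_nat n - 1) = map (fun i => Some (f (k + i)%nat)) (seq 0 n).
Proof.
  intros ->. unfold restr, signal_of.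
  replace (Z.to_nat (Z.of_nat k + Z.of_nat n - 1 - Z.of_nat k + 1)) with n by lia.
  apply map_ext. intro i.
  destruct (Z.ltb_spec (Z.of_nat k + Z.of_nat i) 0); [lia|]. do 2 f_equal. lia.
Qed.

Section Machine.

Context {X U Y : Type} {delta : X -> U -> Y -> X -> Prop} {X0 : X -> Prop}.

Lemma behavior_S_signal_of {mu : nat -> U} {nu : nat -> Y} {xi : nat -> X} :
  full_behavior delta X0 mu nu xi -> behavior_S delta X0 (signal_of nu) (signal_of xi).
Proof.
  intros Hfb. exists mu, nu, xi. split; [exact Hfb|].
  split; intros t Ht; unfold signal_of.
  - destruct (Z.ltb_spec t 0); [split; reflexivity|lia].
  - destruct (Z.ltb_spec t 0); [lia|split; reflexivity].
Qed.

Lemma E_0_iff (b : Z) (x : X) (zeta : list (option Y)) :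
  (0 <= b + 1)%Z ->
  E delta X0 0 b x zeta <->
  exists mu nu xi k, full_behavior delta X0 mu nu xi /\ xi k = x /\
    zeta = window nu k (Z.to_nat (b + 1)).
Proof.
  intros Hb. split.
  - intros (w & xs & k & (mu & nu & xi & Hfb & _ & Hpos) & Hx & ->).
    exists mu, nu, xi, k. split; [exact Hfb|]. split.
    + destruct (Hpos (Z.of_nat k)) as [_ Hxk]; [lia|].
      rewrite Hx, Nat2Z.id in Hxk. congruence.
    + unfold restr, window.
      replace (Z.of_nat k + b - (Z.of_nat k + 0) + 1)%Z with (b + 1)%Z by lia.
      apply map_ext. intro i.
      destruct (Hpos (Z.of_nat k + 0 + Z.of_nat i)%Z) as [-> _]; [lia|]. do 2 f_equal. lia.
  - intros (mu & nu & xi & k & Hfb & Hx & ->).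
    exists (signal_of nu), (signal_of xi), k. split; [exact (behavior_S_signal_of Hfb)|].
    split.
    + unfold signal_of. destruct (Z.ltb_spec (Z.of_nat k) 0); [lia|].
      rewrite Nat2Z.id, Hx. reflexivity.
    + rewrite Z.add_0_r.
      replace (Z.of_nat k + b)%Z with (Z.of_nat k + Z.of_nat (Z.to_nat (b + 1)) - 1)%Z by lia.
      rewrite (restr_signal_of nu k) by reflexivity. reflexivity.
Qed.

Context {l : nat}.

Lemma E_I_iff (x : X) (zeta : list (option Y)) :
  E_I delta X0 l l x zeta <->
  exists mu nu xi k, full_behavior delta X0 mu nu xi /\ xi k = x /\ zeta = window nu k l.
Proof.
  unfold E_I. rewrite Z.sub_diag, E_0_iff by lia.
  replace (Z.to_nat (Z.of_nat l - 1 + 1)) with l by lia. reflexivity.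
Qed.

Lemma E_succ_iff (x : X) (zeta : list (option Y)) :
  E delta X0 0 (Z.of_nat l) x zeta <->
  exists mu nu xi k, full_behavior delta X0 mu nu xi /\ xi k = x /\ zeta = window nu k (S l).
Proof.
  rewrite E_0_iff by lia. replace (Z.to_nat (Z.of_nat l + 1)) with (S l) by lia. reflexivity.
Qed.

Lemma window_E_I {mu : nat -> U} {nu : nat -> Y} {xi : nat -> X} (k : nat) :
  full_behavior delta X0 mu nu xi -> E_I delta X0 l l (xi k) (window nu k l).
Proof. intros Hfb. apply E_I_iff. exists mu, nu, xi, k. auto. Qed.

Lemma E_I_length {x : X} {z : list (option Y)} : E_I delta X0 l l x z -> length z = l.
Proof. intros H. apply E_I_iff in H as (? & ? & ? & ? & _ & _ & ->). apply window_length. Qed.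

Lemma full_behavior_splice {mu1 : nat -> U} {nu1 : nat -> Y} {xi1 : nat -> X} {k : nat}
    {u : U} {y : Y} {x' : X} {mu2 : nat -> U} {nu2 : nat -> Y} {xi2 : nat -> X} {j : nat} :
  full_behavior delta X0 mu1 nu1 xi1 -> delta (xi1 k) u y x' ->
  full_behavior delta X0 mu2 nu2 xi2 -> xi2 j = x' ->
  exists mu nu xi, full_behavior delta X0 mu nu xi /\ xi k = xi1 k /\ nu k = y /\
    forall t, nu (S k + t)%nat = nu2 (j + t)%nat.
Proof.
  intros [Hinit1 Hstep1] Hd [_ Hstep2] Hx'.
  exists (fun i => if (i <? k)%nat then mu1 i else if (i =? k)%nat then u else mu2 (i - S k + j)%nat).
  exists (fun i => if (i <? k)%nat then nu1 i else if (i =? k)%nat then y else nu2 (i - S k + j)%nat).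
  exists (fun i => if (i <=? k)%nat then xi1 i else xi2 (i - S k + j)%nat).
  split; [split|split; [|split]]; cbv beta.
  - destruct (Nat.leb_spec 0 k); [exact Hinit1|lia].
  - intro i. destruct (Nat.ltb_spec i k).
    + destruct (Nat.leb_spec i k); [|lia]. destruct (Nat.leb_spec (S i) k); [|lia]. apply Hstep1.
    + destruct (Nat.eqb_spec i k) as [->|].
      * destruct (Nat.leb_spec k k); [|lia]. destruct (Nat.leb_spec (S k) k); [lia|].
        replace (S k - S k + j)%nat with j by lia. rewrite Hx'. exact Hd.
      * destruct (Nat.leb_spec i k); [lia|]. destruct (Nat.leb_spec (S i) k); [lia|].
        replace (S i - S k + j)%nat with (S (i - S k + j)) by lia. apply Hstep2.
  - destruct (Nat.leb_spec k k); [reflexivity|lia].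
  - destruct (Nat.ltb_spec k k); [lia|]. rewrite Nat.eqb_refl. reflexivity.
  - intro t. destruct (Nat.ltb_spec (S k + t) k); [lia|].
    destruct (Nat.eqb_spec (S k + t) k); [lia|]. f_equal. lia.
Qed.

Hypothesis reach : live_reachable delta X0.

Lemma E_I_inhabited (x : X) : exists z, E_I delta X0 l l x z.
Proof.
  destruct (proj2 reach x) as (mu & nu & xi & k & Hfb & <-).
  exists (window nu k l). exact (window_E_I k Hfb).
Qed.

Lemma E_succ_step {x : X} {u : U} {y : Y} {x' : X} {z' : list (option Y)} :
  delta x u y x' -> E_I delta X0 l l x' z' -> E delta X0 0 (Z.of_nat l) x (Some y :: z').
Proof.
  intros Hd Hz'. destruct (proj2 reach x) as (mu1 & nu1 & xi1 & k & Hfb1 & <-).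
  apply E_I_iff in Hz' as (mu2 & nu2 & xi2 & j & Hfb2 & Hx' & ->).
  destruct (full_behavior_splice Hfb1 Hd Hfb2 Hx') as (mu & nu & xi & Hfb & Hk & Hy & Hnu).
  apply E_succ_iff. exists mu, nu, xi, k. split; [exact Hfb|]. split; [exact Hk|].
  rewrite window_S, Hy. f_equal. unfold window. apply map_ext. intro i. rewrite Hnu. reflexivity.
Qed.

Hypothesis l_pos : (1 <= l)%nat.

Lemma deltahat_iff (z : list (option Y)) (u : U) (y : Y) (z' : list (option Y)) :
  deltahat delta X0 l l z u y z' <->
  z = Some y :: firstn (l - 1) z' /\
  exists x x', E_I delta X0 l l x z /\ E_I delta X0 l l x' z' /\ delta x u y x'.
Proof.
  unfold deltahat. cbv zeta. rewrite Z.sub_diag.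
  replace (Z.of_nat l - 2)%Z with (Z.of_nat (l - 1) - 1)%Z by lia.
  split.
  - intros (_ & Hshift & x & x' & Hx & Hx' & Hd).
    pose proof (E_I_length Hx). pose proof (E_I_length Hx').
    assert (length (Some y :: firstn (l - 1) z') = l) by (simpl; rewrite length_firstn; lia).
    rewrite (srestr_firstn z' (l - 1)), (srestr_full z l),
      (srestr_full (Some y :: firstn (l - 1) z') l) in Hshift by lia.
    split; [exact Hshift|]. exists x, x'. auto.
  - intros (-> & x & x' & Hx & Hx' & Hd).
    pose proof (E_I_length Hx'). split; [reflexivity|]. split; [|exists x, x'; auto].
    assert (length (Some y :: firstn (l - 1) z') = l) by (simpl; rewrite length_firstn; lia).
    rewrite (srestr_firstn z' (l - 1)) by lia. auto using srestr_full.
Qed.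

Lemma window_deltahat {mu : nat -> U} {nu : nat -> Y} {xi : nat -> X} (k : nat) :
  full_behavior delta X0 mu nu xi ->
  deltahat delta X0 l l (window nu k l) (mu k) (nu k) (window nu (S k) l).
Proof.
  intros Hfb. apply deltahat_iff. split; [exact (window_shift nu k l_pos)|].
  exists (xi k), (xi (S k)).
  split; [exact (window_E_I k Hfb)|split; [exact (window_E_I (S k) Hfb)|apply (proj2 Hfb)]].
Qed.

(* A string of Π_{l+1}(B(Q)) taken near time 0 starts with ◇, so its prefix can be an
   abstract state only if the whole string lies in nonnegative time. *)
Lemma Pi_succ_window {zeta : list (option Y)} :
  Pi (S l) (behavior delta X0) zeta ->
  Xhat delta X0 l l (srestr zeta 0 (Z.of_nat l - 1)) ->
  exists mu nu xi s, full_behavior delta X0 mu nu xi /\ zeta = window nu s (S l).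
Proof.
  intros (w & k & (mu & nu & xi & Hfb & Hneg & Hpos) & Hz) (x0 & Hprefix).
  apply E_I_iff in Hprefix as (_ & nu0 & _ & k0 & _ & _ & Hprefix).
  assert (Hzeta : zeta = map (fun i => w (Z.of_nat k - Z.of_nat (S l) + 1 + Z.of_nat i)%Z)
                            (seq 0 (S l))).
  { rewrite Hz. unfold restr. do 2 f_equal. lia. }
  destruct (Nat.ltb_spec k l).
  - exfalso. rewrite srestr_0_map_nth in Hprefix.
    replace (Z.to_nat (Z.of_nat l - 1 + 1)) with l in Hprefix by lia.
    apply (f_equal (fun s => nth 0 s None)) in Hprefix. cbv beta in Hprefix.
    unfold window in Hprefix. rewrite !nth_map_seq0, Hzeta, nth_map_seq0, Hneg in Hprefix by lia.
    discriminate.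
  - exists mu, nu, xi, (k - l)%nat. split; [exact Hfb|]. rewrite Hzeta. unfold window.
    apply map_ext. intro i. rewrite Hpos by lia. do 2 f_equal. lia.
Qed.

Lemma window_Pi_succ {mu : nat -> U} {nu : nat -> Y} {xi : nat -> X} (k : nat) :
  full_behavior delta X0 mu nu xi -> Pi (S l) (behavior delta X0) (window nu k (S l)).
Proof.
  intros Hfb. exists (signal_of nu), (k + l)%nat. split.
  - destruct (behavior_S_signal_of Hfb) as (mu' & nu' & xi' & Hfb' & Hneg & Hpos).
    exists mu', nu', xi'. split; [exact Hfb'|].
    split; intros t Ht; [apply Hneg | apply Hpos]; exact Ht.
  - replace (Z.of_nat (k + l) - Z.of_nat (S l) + 1)%Z with (Z.of_nat k) by lia.
    replace (Z.of_nat (k + l)) with (Z.of_nat k + Z.of_nat (S l) - 1)%Z by lia.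
    rewrite (restr_signal_of nu k) by reflexivity. reflexivity.
Qed.

Lemma sim_Rel_domino_consistent :
  sim_rel (deltahat delta X0 l l) (Xhat0 delta X0 l l) (deltaq delta X0 l) (Xq0 delta X0 l)
    (@pi_Y U Y) (Rel delta X0 l) ->
  domino_consistent delta X0 l.
Proof.
  intros [_ Hsim] zeta Hzeta P HP Hprefix.
  assert (Hhat : Xhat delta X0 l l (srestr zeta 0 (Z.of_nat l - 1)))
    by (destruct HP as (x & ->); exists x; exact Hprefix).
  destruct (Pi_succ_window Hzeta Hhat) as (mu & nu & xi & s & Hfb & ->).
  rewrite srestr_firstn, firstn_window in Hprefix by (rewrite ?window_length; lia).
  assert (HRel : Rel delta X0 l (window nu s l) P)
    by (split; [exists (xi s); exact (window_E_I s Hfb)|auto]).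
  destruct (Hsim _ _ _ _ _ HRel (window_deltahat s Hfb))
    as (u & y & P' & (x & x' & -> & -> & Hd) & (_ & _ & Hnext) & Hy).
  unfold pi_Y in Hy. subst y.
  exists x. split; [reflexivity|]. rewrite window_S. exact (E_succ_step Hd Hnext).
Qed.

Lemma domino_consistent_sim_Rel :
  domino_consistent delta X0 l ->
  sim_rel (deltahat delta X0 l l) (Xhat0 delta X0 l l) (deltaq delta X0 l) (Xq0 delta X0 l)
    (@pi_Y U Y) (Rel delta X0 l).
Proof.
  intros Hdomino. split.
  - intros z (x & HX0 & Hz). exists (E_I delta X0 l l x).
    split; [exists x; auto|]. split; [exists x; exact Hz|split; [exists x; reflexivity|exact Hz]].
  - intros z P u y z' (_ & HP & Hz) Hdh.
    apply deltahat_iff in Hdh as (-> & x1 & x1' & _ & Hx1' & Hd).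
    pose proof (E_succ_step Hd Hx1') as Hsucc.
    assert (HPi : Pi (S l) (behavior delta X0) (Some y :: z')).
    { apply E_succ_iff in Hsucc as (mu & nu & xi & k & Hfb & _ & ->).
      exact (window_Pi_succ k Hfb). }
    assert (Hprefix : srestr (Some y :: z') 0 (Z.of_nat l - 1) = Some y :: firstn (l - 1) z').
    { pose proof (E_I_length Hx1').
      rewrite srestr_firstn by (simpl; lia). replace l with (S (l - 1)) at 1 by lia.
      reflexivity. }
    rewrite <- Hprefix in Hz. destruct (Hdomino _ HPi P HP Hz) as (x & HPx & Hext).
    apply E_succ_iff in Hext as (mu & nu & xi & k & Hfb & Hxk & Hwin).
    rewrite window_S in Hwin. injection Hwin as Hy Hz'.
    exists (mu k), y, (E_I delta X0 l l (xi (S k))). split; [|split].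
    + exists x, (xi (S k)). split; [symmetry; exact HPx|split; [reflexivity|]].
      rewrite <- Hxk, Hy. apply (proj2 Hfb).
    + split; [exists x1'; exact Hx1'|split; [exists (xi (S k)); reflexivity|]].
      rewrite Hz'. exact (window_E_I (S k) Hfb).
    + reflexivity.
Qed.

(* Each simulated step fixes the first symbol and passes to the successor state along
   the trajectory, where the induction hypothesis compares the remaining symbols. *)
Lemma sim_Rel_inv_E_I_firstn
    (Hsim : sim_rel (deltaq delta X0 l) (Xq0 delta X0 l) (deltahat delta X0 l l)
              (Xhat0 delta X0 l l) (@pi_Y U Y) (Rel_inv delta X0 l))
    (n : nat) {x : X} {z z' : list (option Y)} :
  E_I delta X0 l l x z -> E_I delta X0 l l x z' -> firstn n z = firstn n z'.
Proof.
  destruct Hsim as [_ Hsim]. revert x z z'.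
  induction n as [|n IH]; intros x z z' Hz Hz'; [reflexivity|].
  apply E_I_iff in Hz as (mu & nu & xi & k & Hfb & <- & ->).
  assert (HRel : Rel_inv delta X0 l (E_I delta X0 l l (xi k)) z')
    by (split; [exists (xi k); exact Hz'|split; [exists (xi k); reflexivity|exact Hz']]).
  assert (Hdq : deltaq delta X0 l (E_I delta X0 l l (xi k)) (mu k) (nu k)
                  (E_I delta X0 l l (xi (S k))))
    by (exists (xi k), (xi (S k)); split; [reflexivity|split; [reflexivity|apply (proj2 Hfb)]]).
  destruct (Hsim _ _ _ _ _ HRel Hdq) as (u & y & z'' & Hdh & (_ & _ & Hz'') & Hy).
  unfold pi_Y in Hy. apply deltahat_iff in Hdh as (-> & _).
  specialize (IH _ _ _ (window_E_I (S k) Hfb) Hz'').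
  rewrite (window_shift nu k l_pos), <- Hy. simpl. f_equal.
  rewrite !firstn_firstn. exact (firstn_eq_le (Nat.le_min_l n (l - 1)) IH).
Qed.

Lemma sim_Rel_inv_future_unique :
  sim_rel (deltaq delta X0 l) (Xq0 delta X0 l) (deltahat delta X0 l l) (Xhat0 delta X0 l l)
    (@pi_Y U Y) (Rel_inv delta X0 l) ->
  future_unique delta X0 l l.
Proof.
  intros Hsim x z z' Hz Hz'. rewrite Z.sub_diag.
  pose proof (E_I_length Hz). pose proof (E_I_length Hz').
  rewrite (srestr_firstn z l), (srestr_firstn z' l) by lia.
  exact (sim_Rel_inv_E_I_firstn Hsim l Hz Hz').
Qed.

Lemma future_unique_E_I_eq {x : X} {z z' : list (option Y)} :
  future_unique delta X0 l l -> E_I delta X0 l l x z -> E_I delta X0 l l x z' -> z = z'.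
Proof.
  intros Hfu Hz Hz'. pose proof (Hfu _ _ _ Hz Hz') as Heq.
  rewrite Z.sub_diag, (srestr_full z l (E_I_length Hz)), (srestr_full z' l (E_I_length Hz')) in Heq.
  exact Heq.
Qed.

Lemma future_unique_sim_Rel_inv :
  future_unique delta X0 l l ->
  sim_rel (deltaq delta X0 l) (Xq0 delta X0 l) (deltahat delta X0 l l) (Xhat0 delta X0 l l)
    (@pi_Y U Y) (Rel_inv delta X0 l).
Proof.
  intros Hfu. split.
  - intros P (x & HX0 & ->). destruct (E_I_inhabited x) as [z Hz]. exists z.
    split; [exists x; auto|]. split; [exists x; exact Hz|split; [exists x; reflexivity|exact Hz]].
  - intros P z u y P' (_ & (x0 & ->) & Hz) (x & x' & Hx & -> & Hd).
    rewrite Hx in Hz. destruct (E_I_inhabited x') as [z' Hz'].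
    pose proof (E_succ_step Hd Hz') as Hsucc.
    apply E_succ_iff in Hsucc as (mu & nu & xi & k & Hfb & Hxk & Hwin).
    assert (Hzwin : z = window nu k l).
    { subst x. exact (future_unique_E_I_eq Hfu Hz (window_E_I k Hfb)). }
    assert (Hshift : window nu k l = Some y :: firstn (l - 1) z').
    { rewrite <- (firstn_window nu k (Nat.le_succ_diag_r l)), <- Hwin.
      replace l with (S (l - 1)) at 1 by lia. reflexivity. }
    exists u, y, z'. split; [|split].
    + apply deltahat_iff. split; [congruence|]. exists x, x'. auto.
    + split; [exists x'; exact Hz'|split; [exists x'; reflexivity|exact Hz']].
    + reflexivity.
Qed.

End Machine.

Theorem theorem9 (X U Y : Type) (delta : X -> U -> Y -> X -> Prop) (X0 : X -> Prop)
  (l : nat) :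
  FiniteType Y ->
  live_reachable delta X0 ->
  delta_decomp delta ->
  (1 <= l)%nat ->
  (sim_rel (deltahat delta X0 l l) (Xhat0 delta X0 l l)
      (deltaq delta X0 l) (Xq0 delta X0 l)
      (@pi_Y U Y) (Rel delta X0 l)
   <-> domino_consistent delta X0 l) /\
  (sim_rel (deltaq delta X0 l) (Xq0 delta X0 l)
      (deltahat delta X0 l l) (Xhat0 delta X0 l l)
      (@pi_Y U Y) (Rel_inv delta X0 l)
   <-> future_unique delta X0 l l).
Proof.
  intros _ reach _ l_pos. split; split.
  - exact (sim_Rel_domino_consistent reach l_pos).
  - exact (domino_consistent_sim_Rel reach l_pos).
  - exact (sim_Rel_inv_future_unique l_pos).
  - exact (future_unique_sim_Rel_inv reach l_pos).
Qed.
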